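(* Let $k \ge 2$ and $q \ge 0$ be integers with $k$ even, and let $s \in \{0,1\}$ be the unique integer satisfying $s \equiv q + \frac{k-2}{2} \pmod 2$. Then, for any integer $n$ such that \[n \ge \max\left\{k, \frac{k^2}{4} + \frac{q-s}{2}k+s\right\}\] and any function $f:[n]\to \{-1,1\}$ with $|f([n])| \le q$, there is a $k$-block $B\subseteq[n]$ with $f(B)=0$.
   Context: $[n]=\{1,\dots,n\}$; $f(Y)=\sum_{y\in Y}f(y)$; a $k$-block is a set of $k$ consecutive integers. *)

From mathcomp Require Import all_boot all_order all_algebra.
Set Implicit Arguments. Unset Strict Implicit. Unset Printing Implicit Defensive.
Import Order.TTheory GRing.Theory Num.Theory.
(* f(Y) = sum_{y in Y} f(y); [n] = {1,...,n}; a k-block is {a, ..., a+k-1}. *)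

From mathcomp Require Import all_boot all_order all_algebra.
From mathcomp Require Import zify ring lra.
Import Order.TTheory GRing.Theory Num.Theory.
Set Implicit Arguments. Unset Strict Implicit.

(* Let S be the partial sums of f: a walk with steps +-1 from S 0 = 0, whose
   increments W i = S (i + k) - S i are the k-block sums.  As k is even, every
   W i is even and consecutive ones differ by at most 2, so if no W i vanishes
   they all have the sign of W 0; replacing f by -f we may assume W i >= 2.
   Writing n = t k + r with 0 <= r < k, chaining t blocks after position r
   gives S n >= S r + 2 t, where S r >= max (-r, 2 - (k - r)).  Together with
   S n <= q and S n = n (mod 2) this forces n < k^2/4 + (q - s) k/2 + s; the
   parity condition on s rules out the extremal case r = k/2 - 1, S n = q. *)

Local Open Scope ring_scope.

Lemma even_steps_stay_positive (g : nat -> int) (N : nat) :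
  (forall i, (i < N)%N -> `|g i.+1 - g i| <= 2) ->
  (forall i, (i <= N)%N -> (2 %| g i)%Z) ->
  (forall i, (i <= N)%N -> g i != 0) ->
  0 < g 0%N -> forall i, (i <= N)%N -> 2 <= g i.
Proof.
move=> g_step g_even g_nz g0_pos; elim=> [|i IH] iN.
  by have := g_even 0%N isT; lia.
have := IH (ltnW iN); have := g_step i iN.
have := g_even i.+1 iN; have := g_nz i.+1 iN; lia.
Qed.

Section PlusMinusWalk.

Variables (S : nat -> int) (n : nat).
Hypothesis S0 : S 0%N = 0.
Hypothesis S_step : forall i, (i < n)%N -> `|S i.+1 - S i| = 1.

Lemma walk_parity i : (i <= n)%N -> (2 %| S i - i%:Z)%Z.
Proof.
elim: i => [|i IH] iln; first by rewrite S0.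
by have := S_step iln; have := IH (ltnW iln); lia.
Qed.

Lemma walk_lipschitz i d : (i + d <= n)%N -> `|S (i + d)%N - S i| <= d%:Z.
Proof.
elim: d => [|d IH] idn; first by rewrite addn0 subrr.
rewrite addnS in idn *.
by have := S_step idn; have := IH (ltnW idn); lia.
Qed.

Variable k : nat.

Lemma walk_increment_even i :
  ~~ odd k -> (i + k <= n)%N -> (2 %| S (i + k)%N - S i)%Z.
Proof.
move=> k_even ikn; have := walk_parity ikn.
by have := walk_parity (leq_trans (leq_addr k i) ikn); lia.
Qed.

Lemma walk_increment_step i : (i.+1 + k <= n)%N ->
  `|(S (i.+1 + k)%N - S i.+1) - (S (i + k)%N - S i)| <= 2.
Proof.
rewrite addSn => ikn; have := S_step ikn.
by have := S_step (leq_ltn_trans (leq_addr k i) ikn); lia.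
Qed.

Lemma walk_increments_ge2 : ~~ odd k -> (k <= n)%N ->
  (forall i, (i + k <= n)%N -> S (i + k)%N != S i) -> 0 < S k ->
  forall i, (i + k <= n)%N -> 2 <= S (i + k)%N - S i.
Proof.
move=> k_even k_le_n nonzero Sk_pos i ikn.
apply: (@even_steps_stay_positive (fun i => S (i + k)%N - S i) (n - k)) => /=.
- by move=> j jnk; apply: walk_increment_step; lia.
- by move=> j jnk; apply: walk_increment_even => //; lia.
- by move=> j jnk; rewrite subr_eq0; apply: nonzero; lia.
- by rewrite add0n S0 subr0.
- by lia.
Qed.

Hypothesis increments_ge2 : forall i, (i + k <= n)%N -> 2 <= S (i + k)%N - S i.

Lemma walk_chain_bound j r :
  (r + j * k <= n)%N -> S r + 2 * j%:Z <= S (r + j * k)%N.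
Proof.
elim: j => [|j IH] rjk; first by rewrite mul0n addn0; lia.
rewrite mulSn addnCA addnC in rjk *.
have := increments_ge2 rjk; have := IH (leq_trans (leq_addr k _) rjk); lia.
Qed.

Lemma walk_endpoint_bound : (0 < k)%N -> (k <= n)%N ->
  2 * (n %/ k)%:Z - (n %% k)%:Z <= S n /\
  2 * (n %/ k)%:Z + (n %% k)%:Z + 2 - k%:Z <= S n.
Proof.
move=> k_pos k_le_n.
have r_lt_k : (n %% k < k)%N by rewrite ltn_pmod.
have chain := @walk_chain_bound (n %/ k) (n %% k).
rewrite addnC -divn_eq in chain; have {}chain := chain (leqnn n).
have from_start := @walk_lipschitz 0 (n %% k) (leq_trans (ltnW r_lt_k) k_le_n).
have to_k := @walk_lipschitz (n %% k) (k - n %% k).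
rewrite subnKC ?(ltnW r_lt_k) // in to_k; have {}to_k := to_k k_le_n.
have first_block := increments_ge2 (i := 0) k_le_n.
rewrite !add0n S0 in from_start first_block.
lia.
Qed.

End PlusMinusWalk.

Lemma below_threshold_of_endpoint_bounds (m t r q s x : int) :
  1 <= m -> 0 <= r < 2 * m ->
  2 * t - r <= x -> 2 * t + r + 2 - 2 * m <= x -> x <= q ->
  (2 %| x - r)%Z -> 0 <= s <= 1 -> (2 %| q + m - 1 - s)%Z ->
  m * (2 * t) + r + s * m < m * m + q * m + s.
Proof.
move=> m1 /andP[r0 r2m] xr xr' xq xr2 /andP[s0 s1] qms.
have mxq : m * x <= m * q by rewrite ler_pM2l; lia.
have [rlo | rhi] := lerP r (m - 1).
- have mt : m * (2 * t) <= m * (x + r) by rewrite ler_pM2l; lia.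
  have [xlo | xq_eq] : x < q \/ x = q by lia.
  + have mxq' : m * x <= m * (q - 1) by rewrite ler_pM2l; lia.
    have : 0 <= (m + 1) * (m - 1 - r) by apply: mulr_ge0; lia.
    have [-> | ->] : s = 0 \/ s = 1 by lia.
    * lia.
    * lia.
  + (* r = x = q = m - 1 - s (mod 2), so s = 1 excludes r = m - 1 *)
    rewrite -xq_eq.
    have : 0 <= (m + 1) * (m - 1 - s - r) by apply: mulr_ge0; lia.
    lia.
- have mt : m * (2 * t) <= m * (x + 2 * m - 2 - r) by rewrite ler_pM2l; lia.
  have : 0 <= (m - 1) * (r - m) by apply: mulr_ge0; lia.
  have [-> | ->] : s = 0 \/ s = 1 by lia.
  + lia.
  + lia.
Qed.

Lemma walk_has_balanced_window (S : nat -> int) (n k m q s : nat) :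
  S 0%N = 0 -> (forall i, (i < n)%N -> `|S i.+1 - S i| = 1) ->
  k = (2 * m)%N -> (0 < m)%N -> (k <= n)%N -> `|S n| <= q%:Z ->
  s = ((q + m - 1) %% 2)%N -> (m * m + q * m + s <= n + s * m)%N ->
  exists2 i, (i + k <= n)%N & S (i + k)%N = S i.
Proof.
move=> S0 S_step km m_pos kn Sn_q s_par big_n.
have [/existsP[[i /= _] /andP[ikn /eqP window0]] | none] :=
  boolP [exists i : 'I_n.+1, (i + k <= n)%N && (S (i + k)%N == S i)].
  by exists i.
have {none} nonzero : forall i, (i + k <= n)%N -> S (i + k)%N != S i.
  move=> i ikn; apply: contraNN none => window0; apply/existsP.
  by exists (Ordinal (leq_trans (leq_addr k i) ikn : (i < n.+1)%N)); rewrite /= ikn.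
exfalso; wlog Sk_pos : S S0 S_step Sn_q nonzero / 0 < S k.
  move=> wlog_pos; have := nonzero 0%N kn; rewrite add0n S0.
  have [Sk_gt0 _ | Sk_le0 Sk_ne0] := ltrP 0 (S k); first exact: (wlog_pos S).
  apply: (wlog_pos (fun i => - S i)) => /=.
  - by rewrite S0 oppr0.
  - by move=> i /S_step; rewrite -opprD normrN.
  - by rewrite normrN.
  - by move=> i /nonzero; rewrite eqr_opp.
  - by lia.
have k_even : ~~ odd k by rewrite km; lia.
have k_pos : (0 < k)%N by lia.
have increments_ge2 := walk_increments_ge2 S0 S_step k_even kn nonzero Sk_pos.
have [lo_left lo_right] := walk_endpoint_bound S0 S_step increments_ge2 k_pos kn.
have Sn_parity := walk_parity S0 S_step (leqnn n).
have n_eq := divn_eq n k; have r_lt_k := ltn_pmod n k_pos.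
have := below_threshold_of_endpoint_bounds
  (m := m) (t := (n %/ k)%N) (r := (n %% k)%N) (q := q) (s := s) (x := S n).
rewrite km in n_eq r_lt_k lo_left lo_right *; lia.
Qed.

Lemma threshold_as_nat (R : realFieldType) (k m q s n : nat) : k = (2 * m)%N ->
  (k ^ 2)%:R / 4 + ((q%:R - s%:R) / 2) * k%:R + s%:R <= (n%:R : R) ->
  (m * m + q * m + s <= n + s * m)%N.
Proof.
move=> -> threshold; rewrite -(ler_nat R) !natrD !natrM.
by move: threshold; rewrite natrX !natrM; lra.
Qed.

Lemma partial_sum_window (f : nat -> int) (i k : nat) :
  \sum_(i.+1 <= j < (i.+1 + k)%N) f j =
  \sum_(1 <= j < (i + k)%N.+1) f j - \sum_(1 <= j < i.+1) f j.
Proof.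
rewrite (@big_cat_nat _ _ _ i.+1 1 (i + k).+1) //= ?ltnS ?leq_addr //.
by rewrite addSn addrAC subrr add0r.
Qed.

Local Close Scope ring_scope.

Theorem corollary2p3 (k q s n : nat) (f : nat -> int) :
  2 <= k -> ~~ odd k ->
  s <= 1 -> s = q + (k - 2) %/ 2 %[mod 2] ->
  k <= n ->
  (((k ^ 2)%:R / 4 + ((q%:R - s%:R) / 2) * k%:R + s%:R)%R <= (n%:R : rat))%R ->
  (forall i, 1 <= i <= n -> f i = 1%R \/ f i = (-1)%R) ->
  (`| \sum_(1 <= i < n.+1) f i | <= q%:R)%R ->
  exists a : nat, [/\ 1 <= a, a + k - 1 <= n & (\sum_(a <= i < a + k) f i = 0)%R].
Proof.
move=> k2 k_even s1 s_mod kn threshold f_pm sum_q.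
set m := k %/ 2.
have km : k = 2 * m by rewrite /m; lia.
have s_par : s = (q + m - 1) %% 2 by move: s_mod; rewrite modn_small /m; lia.
pose S i := (\sum_(1 <= j < i.+1) f j)%R.
have S0 : S 0 = 0%R by rewrite /S big_geq.
have S_step i : i < n -> (`|S i.+1 - S i| = 1)%R.
  move=> lt_in; rewrite /S big_nat_recr //= addrAC subrr add0r.
  by have [|->|->] := f_pm i.+1.
have m_pos : 0 < m by lia.
have Sn_q : (`|S n| <= q%:Z)%R by rewrite -natz.
have [i ikn window0] := walk_has_balanced_window S0 S_step km m_pos kn Sn_q s_par
  (threshold_as_nat km threshold).
exists i.+1; split; [by [] | lia |].
by rewrite partial_sum_window -/(S (i + k)) -/(S i) window0 subrr.
Qed.
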